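(* Let $X$ be a non-empty set and let $\mathcal{U}\subseteq P(X)$ be anti-closed under finite intersections. Then $\mathcal{U}$ is anti-closed under arbitrary intersections.
   Context: For a family $\mathcal{U}\subseteq P(X)$: $\mathcal{U}$ is anti-closed under finite intersections if for every $n\in\mathbb{N}$ and all $A_1,\dots,A_n\in\mathcal{U}$ that are not all equal, $\bigcap_{i=1}^n A_i\notin\mathcal{U}$; $\mathcal{U}$ is anti-closed under arbitrary intersections if for every non-empty index set $J$ and all $A_i\in\mathcal{U}$ ($i\in J$) not all equal, $\bigcap_{i\in J}A_i\notin\mathcal{U}$; $\mathcal{U}$ is anti-closed under arbitrary unions if for every non-empty index set $J$ and all $A_i\in\mathcal{U}$ ($i\in J$) not all equal, $\bigcup_{i\in J}A_i\notin\mathcal{U}$. *)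

From Stdlib Require Import Arith.

Definition anti_closed_fin_inter {X : Type} (U : (X -> Prop) -> Prop) : Prop :=
  forall (n : nat) (A : nat -> (X -> Prop)),
    (forall i, i < n -> U (A i)) ->
    (exists i j, i < n /\ j < n /\ A i <> A j) ->
    ~ U (fun x => forall i, i < n -> A i x).

Definition anti_closed_arb_inter {X : Type} (U : (X -> Prop) -> Prop) : Prop :=
  forall (J : Type) (A : J -> (X -> Prop)),
    inhabited J ->
    (forall i, U (A i)) ->
    (exists i j, A i <> A j) ->
    ~ U (fun x => forall i, A i x).

From Stdlib Require Import Lia FunctionalExtensionality PropExtensionality Classical.

(* The intersection of a family in U lies in U, so by the binary case it equals
   each member of the family; hence all members are equal. *)

Definition pair_family {X : Type} (C B : X -> Prop) (k : nat) : X -> Prop :=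
  if Nat.eqb k 0 then C else B.

Lemma pair_family_inter {X : Type} (C B : X -> Prop) :
  (forall x, B x -> C x) ->
  (fun x => forall i, i < 2 -> pair_family C B i x) = B.
Proof.
  intros HBC; apply functional_extensionality; intros x.
  apply propositional_extensionality; split.
  - intros Hall; exact (Hall 1 ltac:(lia)).
  - intros Hx [|i] _; [exact (HBC x Hx) | exact Hx].
Qed.

Lemma anti_closed_fin_inter_subset_eq {X : Type} (U : (X -> Prop) -> Prop)
    (C B : X -> Prop) :
  anti_closed_fin_inter U -> U C -> U B -> (forall x, B x -> C x) -> C = B.
Proof.
  intros HU HC HB HBC.
  apply NNPP; intros NE.
  apply (HU 2 (pair_family C B)).
  - intros [|i] _; assumption.
  - exists 0, 1; repeat split; [lia | lia | exact NE].
  - rewrite pair_family_inter; assumption.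
Qed.

Theorem mainTheorem3 (X : Type) (HX : inhabited X) (U : (X -> Prop) -> Prop) :
  anti_closed_fin_inter U -> anti_closed_arb_inter U.
Proof.
  intros HU J A _ HA [i [j Hij]] Hinter.
  apply Hij.
  rewrite (anti_closed_fin_inter_subset_eq U (A i) _ HU (HA i) Hinter (fun x Hx => Hx i)).
  rewrite (anti_closed_fin_inter_subset_eq U (A j) _ HU (HA j) Hinter (fun x Hx => Hx j)).
  reflexivity.
Qed.
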